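(* Let $q=q_0^2$ be odd and let $V$ be a vector space over $\mathbb{F}_q$ with a non-degenerate hermitian form $f$. Let $s\ge1$ and let $v=\sum_{i=1}^s v_i$ for singular vectors $v_1,\dots,v_s\in V$. Then there exist $1\le i\le s$ and $\lambda\in\mathbb{F}_{q_0}$ such that $v-\lambda v_i$ is singular.
   Context: The hermitian form satisfies $f(u,\lambda v+w)=\lambda f(u,v)+f(u,w)$ and $f(w,u)=f(u,w)^{q_0}$. A vector $v$ is singular if $f(v,v)=0$. *)

From mathcomp Require Import all_boot all_algebra.
Set Implicit Arguments. Unset Strict Implicit. Unset Printing Implicit Defensive.
Import GRing.Theory.
Local Open Scope ring_scope.

(* A hermitian form on V (over F = F_{q0^2}): linear in the second argument,
   and f(w,u) = f(u,w)^{q0}. *)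
Definition herm_form (F : fieldType) (V : lmodType F) (q0 : nat)
  (f : V -> V -> F) : Prop :=
  (forall (u v w : V) (l : F), f u (l *: v + w) = l * f u v + f u w) /\
  (forall u w : V, f w u = (f u w) ^+ q0).

Definition nondeg_form (F : fieldType) (V : lmodType F) (f : V -> V -> F) : Prop :=
  forall u : V, (forall w : V, f u w = 0) -> u = 0.

Definition singular_vec (F : fieldType) (V : lmodType F) (f : V -> V -> F) (v : V) : Prop :=
  f v v = 0.

(* Elements of the subfield F_{q0} of F_{q0^2}: fixed points of x |-> x^q0. *)
Definition in_subfield (F : fieldType) (q0 : nat) (l : F) : Prop := l ^+ q0 = l.

From mathcomp Require Import all_boot all_algebra pgroup abelian finfield.
Set Implicit Arguments.
Unset Strict Implicit.
Unset Printing Implicit Defensive.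

Import GRing.Theory.
Local Open Scope ring_scope.

(* Put c := f(v,v) and t_i := f(v,v_i) + f(v,v_i)^q0; both lie in F_q0.  For
   l in F_q0, singularity of v_i gives f(v - l v_i, v - l v_i) = c - l t_i.
   If c = 0 take l = 0.  Otherwise sum_i t_i = c + c^q0 = 2c is nonzero as q is
   odd, so some t_i is nonzero and l = c / t_i works. *)

Section AdditivePower.

Variables (F : fieldType) (q0 : nat).
Hypothesis frobD : {morph (fun x : F => x ^+ q0) : x y / x + y}.

Lemma frob0 : 0 ^+ q0 = 0 :> F.
Proof. by apply: (addrI (0 ^+ q0)); rewrite -frobD !addr0. Qed.

Lemma frobB : {morph (fun x : F => x ^+ q0) : x y / x - y}.
Proof. by move=> x y; apply: (addIr (y ^+ q0)); rewrite -frobD !subrK. Qed.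

Lemma frob_sum (I : finType) (g : I -> F) :
  (\sum_i g i) ^+ q0 = \sum_i g i ^+ q0.
Proof. exact: (big_morph _ frobD frob0). Qed.

End AdditivePower.

Lemma in_subfield_div (F : fieldType) (q0 : nat) (x y : F) :
  in_subfield q0 x -> in_subfield q0 y -> in_subfield q0 (x / y).
Proof. by rewrite /in_subfield exprMn exprVn => -> ->. Qed.

Section HermitianForm.

Variables (F : fieldType) (V : lmodType F) (q0 : nat) (f : V -> V -> F).
Hypothesis hf : herm_form q0 f.

Lemma herm_formZDr u v w l : f u (l *: v + w) = l * f u v + f u w.
Proof. by case: hf => ->. Qed.

Lemma herm_formC u w : f w u = f u w ^+ q0.
Proof. by case: hf => _ ->. Qed.

Lemma herm_formDr u v w : f u (v + w) = f u v + f u w.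
Proof. by rewrite -{1}[v]scale1r herm_formZDr mul1r. Qed.

Lemma herm_form0r u : f u 0 = 0.
Proof. by apply: (addrI (f u 0)); rewrite -herm_formDr !addr0. Qed.

Lemma herm_formZr u v l : f u (l *: v) = l * f u v.
Proof. by rewrite -[l *: v]addr0 herm_formZDr herm_form0r addr0. Qed.

Lemma herm_formBr u v w : f u (v - w) = f u v - f u w.
Proof. by rewrite -scaleN1r addrC herm_formZDr mulN1r addrC. Qed.

Lemma herm_form_sumr u (I : finType) (us : I -> V) :
  f u (\sum_i us i) = \sum_i f u (us i).
Proof. exact: (big_morph _ (herm_formDr u) (herm_form0r u)). Qed.

Lemma herm_form_self_subfield u : in_subfield q0 (f u u).
Proof. by rewrite /in_subfield -herm_formC. Qed.

Section AdditiveFrobenius.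

Hypothesis frobD : {morph (fun x : F => x ^+ q0) : x y / x + y}.

Lemma herm_form_trace_subfield v u : in_subfield q0 (f v u + f v u ^+ q0).
Proof. by rewrite /in_subfield frobD -!herm_formC addrC. Qed.

Lemma herm_form_sub_singular v u l :
  singular_vec f u -> in_subfield q0 l ->
  f (v - l *: u) (v - l *: u) = f v v - l * (f v u + f v u ^+ q0).
Proof.
move=> uu0 hl.
have fwv : f (v - l *: u) v = f v v - l * f v u ^+ q0.
  rewrite herm_formC herm_formBr herm_formZr frobB // exprMn hl.
  by rewrite herm_form_self_subfield.
have fwu : f (v - l *: u) u = f v u.
  by rewrite herm_formC herm_formBr herm_formZr uu0 mulr0 subr0 -herm_formC.
by rewrite herm_formBr herm_formZr fwv fwu mulrDr opprD addrA addrAC.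
Qed.

Lemma herm_form_sum_trace v (I : finType) (us : I -> V) :
  \sum_i (f v (us i) + f v (us i) ^+ q0)
  = f v (\sum_i us i) + f v (\sum_i us i) ^+ q0.
Proof. by rewrite big_split herm_form_sumr frob_sum. Qed.

Hypothesis two_neq0 : 2%:R != 0 :> F.

Theorem exists_singular_sub_scaled (I : finType) (i0 : I) (vs : I -> V) :
  (forall i, singular_vec f (vs i)) ->
  exists (i : I) (l : F),
    in_subfield q0 l /\ singular_vec f (\sum_j vs j - l *: vs i).
Proof.
move=> vs_sing; set v := \sum_j vs j; set c := f v v.
pose t i := f v (vs i) + f v (vs i) ^+ q0.
have [c0 | c_neq0] := eqVneq c 0.
  exists i0, 0; split; first exact: frob0.
  by rewrite /singular_vec scale0r subr0.
have sum_t : \sum_i t i = c *+ 2.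
  by rewrite herm_form_sum_trace -/v -/c herm_form_self_subfield mulr2n.
have [i t_neq0] : exists i, t i != 0.
  apply/existsP; apply: contraNT c_neq0; rewrite negb_exists => /forallP t0.
  move: sum_t; rewrite big1 => [/esym/eqP|i _]; last exact/eqP/negPn/t0.
  by rewrite -mulr_natr mulf_eq0 (negPf two_neq0) orbF.
have l_subfield : in_subfield q0 (c / t i).
  apply: in_subfield_div; first exact: herm_form_self_subfield.
  exact: herm_form_trace_subfield.
exists i, (c / t i); split => //.
by rewrite /singular_vec herm_form_sub_singular // divfK // subrr.
Qed.

End AdditiveFrobenius.

End HermitianForm.

Section FiniteField.

Variable F : finFieldType.

Lemma pchar_nat_card : [pchar F].-nat #|F|.
Proof.
have [p _ hp] := finPcharP F.
rewrite (eq_pnat _ (pcharf_eq hp)).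
by have := abelem_pgroup (fin_ring_pchar_abelem hp); rewrite /pgroup cardsT.
Qed.

Lemma odd_card_two_neq0 : odd #|F| -> 2%:R != 0 :> F.
Proof.
move=> odd_F; rewrite natf_neq0_pchar pnatE //; apply/negP => pchar2.
have two_nat : 2%N.-nat #|F|.
  by rewrite -(eq_pnat _ (pcharf_eq pchar2)) pchar_nat_card.
have two'_nat : (2%N)^'.-nat #|F| by rewrite p'natE // dvdn2 negbK.
by have := finNzRing_gt1 F; rewrite (pnat_1 two_nat two'_nat).
Qed.

Lemma sqr_card_frobD (q0 : nat) :
  #|F| = (q0 ^ 2)%N -> {morph (fun x : F => x ^+ q0) : x y / x + y}.
Proof.
move=> hq x y /=; apply: exprDn_pchar; apply: pnat_dvd pchar_nat_card.
by rewrite hq dvdn_exp.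
Qed.

End FiniteField.

Theorem lemma4p19 (F : finFieldType) (q0 : nat)
  (hq : #|F| = (q0 ^ 2)%N) (hodd : odd #|F|)
  (V : lmodType F) (f : V -> V -> F)
  (hf : herm_form q0 f) (hnd : nondeg_form f)
  (s : nat) (hs : (1 <= s)%N) (vs : 'I_s -> V)
  (hsing : forall i, singular_vec f (vs i)) :
  exists (i : 'I_s) (l : F),
    in_subfield q0 l /\ singular_vec f ((\sum_(j < s) vs j) - l *: vs i).
Proof.
exact: (exists_singular_sub_scaled hf (sqr_card_frobD hq)
          (odd_card_two_neq0 hodd) (Ordinal hs) hsing).
Qed.
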